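(* Let $w=w_1\cdots w_n$ be a word of length $n\ge 2$ such that $w_i=w_{n-i+1}$ for all $1\le i\le n$, and let $k$ be the maximum number of times any single letter appears in $w$. Then $f(w)=\max\{n,2k\}+2$.
   Context: A word of length $n$ is a sequence $w=w_1w_2\cdots w_n$ of letters (symbols). Let $[n]=\{1,\dots,n\}$. An $n$-grid is a function $G:[n]^2\to\Sigma$, where $\Sigma$ is an arbitrary set of letters. The $i$th row of $G$ contains $w$ if $G(i,j)=w_j$ for all $1\le j\le n$, or $G(i,j)=w_{n-j+1}$ for all $1\le j\le n$. The $j$th column contains $w$ if $G(i,j)=w_i$ for all $i$, or $G(i,j)=w_{n-i+1}$ for all $i$. The main diagonal contains $w$ if $G(i,i)=w_i$ for all $i$ or $G(i,i)=w_{n-i+1}$ for all $i$; the anti-diagonal contains $w$ if $G(i,n-i+1)=w_i$ for all $i$ or $G(i,n-i+1)=w_{n-i+1}$ for all $i$. Let $f(w,G)$ be the number of the $2n+2$ lines ($n$ rows, $n$ columns, $2$ diagonals) of $G$ that contain $w$, and $f(w)=\max_G f(w,G)$ over all $n$-grids $G$. *)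

(* Words of length n over an alphabet T (an eqType) are
   functions 'I_n -> T (0-based indices); an n-grid is a function
   'I_n -> 'I_n -> T (G i j = entry in row i, column j). *)
From mathcomp Require Import all_boot all_order.
Set Implicit Arguments. Unset Strict Implicit. Unset Printing Implicit Defensive.

Section Grid.
Variables (T : eqType) (n : nat).

Definition row_contains (w : 'I_n -> T) (G : 'I_n -> 'I_n -> T) (i : 'I_n) : bool :=
  [forall j, G i j == w j] || [forall j, G i j == w (rev_ord j)].

Definition col_contains (w : 'I_n -> T) (G : 'I_n -> 'I_n -> T) (j : 'I_n) : bool :=
  [forall i, G i j == w i] || [forall i, G i j == w (rev_ord i)].

Definition diag_contains (w : 'I_n -> T) (G : 'I_n -> 'I_n -> T) : bool :=
  [forall i, G i i == w i] || [forall i, G i i == w (rev_ord i)].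

(* anti-diagonal contains w: G(i, n-i+1) in 1-based indexing *)
Definition antidiag_contains (w : 'I_n -> T) (G : 'I_n -> 'I_n -> T) : bool :=
  [forall i, G i (rev_ord i) == w i] || [forall i, G i (rev_ord i) == w (rev_ord i)].

Definition fwG (w : 'I_n -> T) (G : 'I_n -> 'I_n -> T) : nat :=
  #|[pred i | row_contains w G i]| + #|[pred j | col_contains w G j]|
  + diag_contains w G + antidiag_contains w G.

Definition f_is (w : 'I_n -> T) (m : nat) : Prop :=
  (exists G : 'I_n -> 'I_n -> T, fwG w G = m) /\
  (forall G : 'I_n -> 'I_n -> T, fwG w G <= m).

Definition max_mult (w : 'I_n -> T) : nat :=
  \max_(i : 'I_n) #|[pred j | w j == w i]|.

End Grid.

(* For a palindrome w, a line contains w backwards iff it contains it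
   forwards.  If column j0 contains w, then every row i containing w has
   w_i = G(i, j0) = w_j0, so at most k rows contain w; symmetrically, if some
   row contains w then at most k columns do.  Hence either rows and columns
   together give at most 2k lines, or only one family contributes, at most n
   lines; the diagonals add at most 2.  Equality is attained by the grid all of
   whose rows are w (n rows), and, for a letter a occurring k times, by the
   grid whose row i is w if w_i = a and constant w_i otherwise (k rows and the
   k columns j with w_j = a).  Both grids have G(i, i) = G(i, n-i+1) = w_i by
   the palindrome property, so both diagonals contain w as well. *)
From mathcomp Require Import all_boot all_order.

Set Implicit Arguments.
Unset Strict Implicit.
Unset Printing Implicit Defensive.

Section MaxMult.
Variables (T : eqType) (n : nat) (w : 'I_n -> T).

Lemma card_le_max_mult (i0 : 'I_n) (A : {pred 'I_n}) :
  (forall i, i \in A -> w i = w i0) -> #|A| <= max_mult w.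
Proof.
move=> Aw; apply: leq_trans (leq_bigmax i0).
by apply/subset_leq_card/subsetP => i; rewrite !inE => /Aw ->.
Qed.

Lemma max_mult_attained : 0 < n ->
  exists i0 : 'I_n, max_mult w = #|[pred j | w j == w i0]|.
Proof. by move=> n_gt0; eexists; rewrite /max_mult (bigmax_eq_arg (Ordinal n_gt0)). Qed.

End MaxMult.

Section Palindrome.
Variables (T : eqType) (n : nat) (w : 'I_n -> T).
Hypothesis w_pal : forall i : 'I_n, w i = w (rev_ord i).

Let forall_rev (P : 'I_n -> T -> bool) :
  [forall i, P i (w (rev_ord i))] = [forall i, P i (w i)].
Proof. by apply: eq_forallb => i; rewrite -w_pal. Qed.

Lemma row_containsE G i : row_contains w G i = [forall j, G i j == w j].
Proof. by rewrite /row_contains (forall_rev (fun j => eq_op (G i j))) orbb. Qed.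

Lemma col_containsE G j : col_contains w G j = [forall i, G i j == w i].
Proof. by rewrite /col_contains (forall_rev (fun i => eq_op (G i j))) orbb. Qed.

Lemma diag_containsE G : diag_contains w G = [forall i, G i i == w i].
Proof. by rewrite /diag_contains (forall_rev (fun i => eq_op (G i i))) orbb. Qed.

Lemma antidiag_containsE G :
  antidiag_contains w G = [forall i, G i (rev_ord i) == w i].
Proof.
by rewrite /antidiag_contains (forall_rev (fun i => eq_op (G i (rev_ord i)))) orbb.
Qed.

Lemma card_rows_le_max_mult G j0 : col_contains w G j0 ->
  #|[pred i | row_contains w G i]| <= max_mult w.
Proof.
rewrite col_containsE => /forallP col_j0.
apply: (card_le_max_mult (i0 := j0)) => i; rewrite inE row_containsE.
by move=> /forallP/(_ j0)/eqP <-; apply/esym/eqP.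
Qed.

Lemma card_cols_le_max_mult G i0 : row_contains w G i0 ->
  #|[pred j | col_contains w G j]| <= max_mult w.
Proof.
rewrite row_containsE => /forallP row_i0.
apply: (card_le_max_mult (i0 := i0)) => j; rewrite inE col_containsE.
by move=> /forallP/(_ i0)/eqP <-; apply/esym/eqP.
Qed.

Lemma card_lines_le G :
  #|[pred i | row_contains w G i]| + #|[pred j | col_contains w G j]|
    <= maxn n (2 * max_mult w).
Proof.
have card_le_n (A : pred 'I_n) : #|A| <= n by rewrite -[n in _ <= n]card_ord max_card.
case: (pickP [pred j | col_contains w G j]) => [j0 col_j0 | no_col]; last first.
  by rewrite (eq_card0 no_col) addn0 (leq_trans (card_le_n _)) ?leq_maxl.
case: (pickP [pred i | row_contains w G i]) => [i0 row_i0 | no_row]; last first.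
  by rewrite (eq_card0 no_row) (leq_trans (card_le_n _)) ?leq_maxl.
apply: leq_trans (leq_maxr _ _); rewrite mul2n -addnn.
by rewrite leq_add // ?(card_rows_le_max_mult col_j0) ?(card_cols_le_max_mult row_i0).
Qed.

Lemma fwG_le G : fwG w G <= maxn n (2 * max_mult w) + 2.
Proof.
rewrite /fwG -addnA leq_add ?card_lines_le //.
by case: (diag_contains _ _); case: (antidiag_contains _ _).
Qed.

Lemma fwG_both_diagonals G :
  (forall i, G i i = w i) -> (forall i, G i (rev_ord i) = w i) ->
  fwG w G = #|[pred i | row_contains w G i]| + #|[pred j | col_contains w G j]| + 2.
Proof.
move=> diagG antidiagG; rewrite /fwG -addnA diag_containsE antidiag_containsE.
have -> : [forall i, G i i == w i] by apply/forallP => i; rewrite diagG.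
by have -> : [forall i, G i (rev_ord i) == w i] by apply/forallP => i; rewrite antidiagG.
Qed.

Definition rows_grid : 'I_n -> 'I_n -> T := fun _ j => w j.

Definition cross_grid (a : T) : 'I_n -> 'I_n -> T :=
  fun i j => if w i == a then w j else w i.

Lemma fwG_rows_grid : n + 2 <= fwG w rows_grid.
Proof.
rewrite fwG_both_diagonals // leq_add2r (leq_trans _ (leq_addr _ _)) // -[n in n <= _]card_ord.
by apply/subset_leq_card/subsetP => i _; rewrite inE row_containsE; apply/forallP.
Qed.

Lemma fwG_cross_grid a :
  2 * #|[pred i | w i == a]| + 2 <= fwG w (cross_grid a).
Proof.
rewrite fwG_both_diagonals => [| i | i]; last 2 first.
- by rewrite /cross_grid if_same.
- by rewrite /cross_grid -w_pal if_same.
rewrite leq_add2r mul2n -addnn leq_add //; apply/subset_leq_card/subsetP => k.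
  by rewrite !inE row_containsE => wk; apply/forallP => j; rewrite /cross_grid wk.
rewrite !inE col_containsE => /eqP wk; apply/forallP => i; rewrite /cross_grid.
by case: (w i =P a) => [-> | _]; rewrite ?wk.
Qed.

End Palindrome.

Theorem theorem2 (T : eqType) (n : nat) (w : 'I_n -> T) :
  2 <= n ->
  (forall i : 'I_n, w i = w (rev_ord i)) ->
  f_is w (maxn n (2 * max_mult w) + 2).
Proof.
move=> n_ge2 w_pal; split; last exact: fwG_le w_pal.
have [i0 max_mult_i0] := max_mult_attained w (ltnW n_ge2).
suff [G fwG_ge] : exists G, maxn n (2 * max_mult w) + 2 <= fwG w G.
  by exists G; apply/eqP; rewrite eqn_leq fwG_ge (fwG_le w_pal).
case: (leqP (2 * max_mult w) n) => _.
  by exists (rows_grid w); apply: fwG_rows_grid.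
by exists (cross_grid w (w i0)); rewrite max_mult_i0 (fwG_cross_grid w_pal).
Qed.
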